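(* For integers $q\ge1$, $a$, $n$ define $S(q,a,n)=\sum_{x=1}^q e\big(\frac{ax^2+nx}{q}\big)$, and for integers $n_1,n_2,n_3,m$ define $$T(q;n_1,n_2,n_3,m)=\sum_{\substack{a=1\\ (a,q)=1}}^q S(q,a,n_1)S(q,a,n_2)S(q,a,n_3)\,e\Big(\frac{\overline{a}\,m}{q}\Big),$$ where $\overline{a}$ denotes the inverse of $a$ modulo $q$. If $q_1,q_2$ are positive integers with $(q_1,q_2)=1$, then for all integers $n_1,n_2,n_3,m$, $$T(q_1q_2;n_1,n_2,n_3,m)=T(q_1;n_1,n_2,n_3,m)\,T(q_2;n_1,n_2,n_3,m).$$
   Context: $e(z)=e^{2\pi i z}$. *)

From Stdlib Require Import Reals ZArith List.
From Coquelicot Require Import Coquelicot.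

Definition e (x : R) : C := (cos (2 * PI * x), sin (2 * PI * x))%R.

(* sum_{x=1}^{q} f x, for q >= 1 (empty sum if q <= 0). *)
Definition sum1 (q : Z) (f : Z -> C) : C :=
  fold_right (fun k acc => Cplus (f (Z.of_nat k)) acc) (RtoC 0)
             (List.seq 1 (Z.to_nat q)).

(* The inverse of a modulo q: the least b in {1..q} with a*b = 1 (mod q)
   (exists whenever gcd(a,q)=1, q>=1); 0 if none exists. *)
Definition invmod (a q : Z) : Z :=
  match find (fun b => Z.eqb ((a * b) mod q) (1 mod q))
             (map Z.of_nat (List.seq 1 (Z.to_nat q))) with
  | Some b => b
  | None => 0%Z
  end.

Definition S (q a n : Z) : C :=
  sum1 q (fun x => e (IZR (a * x ^ 2 + n * x) / IZR q)).

Definition T (q n1 n2 n3 m : Z) : C :=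
  sum1 q (fun a =>
    if Z.eqb (Z.gcd a q) 1 then
      Cmult (Cmult (Cmult (S q a n1) (S q a n2)) (S q a n3))
            (e (IZR (invmod a q * m) / IZR q))
    else RtoC 0).

(* Everything splits under the Chinese remainder theorem. Writing x = x1 q2 + x2 q1 gives
   S(q1 q2, a, n) = S(q1, a q2, n) S(q2, a q1, n); and if u q2 + v q1 = 1, then
   (inverse of a mod q1 q2) * u is an inverse of a q2 mod q1, so the twist e(ā m / q1 q2)
   splits the same way. Hence the summand of T(q1 q2) at a is the product of the summands
   of T(q1) at a q2 and of T(q2) at a q1. Summing over a = a1 q2 + a2 q1, the arguments
   become q2^2 a1 mod q1 and q1^2 a2 mod q2, and multiplying by these units only permutes
   the residues. *)

From Stdlib Require Import Reals ZArith List Permutation Znumtheory Lia.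
From Coquelicot Require Import Coquelicot.

Local Open Scope Z_scope.

Definition lsum {A} (l : list A) (f : A -> C) : C :=
  fold_right (fun x acc => Cplus (f x) acc) (RtoC 0) l.

Lemma sum1_lsum q f : sum1 q f = lsum (seq 1 (Z.to_nat q)) (fun k => f (Z.of_nat k)).
Proof. reflexivity. Qed.

Lemma lsum_ext {A} (l : list A) f g :
  (forall x, In x l -> f x = g x) -> lsum l f = lsum l g.
Proof.
  induction l as [|a l IH]; intros H; simpl; [reflexivity|].
  rewrite (H a) by (left; reflexivity).
  rewrite IH by (intros; apply H; right; assumption). reflexivity.
Qed.

Lemma lsum_app {A} (l1 l2 : list A) f : lsum (l1 ++ l2) f = Cplus (lsum l1 f) (lsum l2 f).
Proof. induction l1 as [|a l1 IH]; simpl; [|rewrite IH]; ring. Qed.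

Lemma lsum_map {A B} (l : list A) (h : A -> B) f : lsum (map h l) f = lsum l (fun x => f (h x)).
Proof. induction l as [|a l IH]; simpl; [|rewrite IH]; reflexivity. Qed.

Lemma lsum_perm {A} (l l' : list A) f : Permutation l l' -> lsum l f = lsum l' f.
Proof. induction 1; simpl; try congruence; ring. Qed.

Lemma lsum_scal {A} (l : list A) c f : Cmult c (lsum l f) = lsum l (fun x => Cmult c (f x)).
Proof. induction l as [|a l IH]; simpl; [|rewrite <- IH]; ring. Qed.

Lemma lsum_mul {A B} (l1 : list A) (l2 : list B) f g :
  Cmult (lsum l1 f) (lsum l2 g) = lsum l1 (fun x => lsum l2 (fun y => Cmult (f x) (g y))).
Proof. induction l1 as [|a l1 IH]; simpl; [|rewrite <- IH, <- lsum_scal]; ring. Qed.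

Lemma lsum_list_prod {A B} (l1 : list A) (l2 : list B) f :
  lsum (list_prod l1 l2) f = lsum l1 (fun x => lsum l2 (fun y => f (x, y))).
Proof. induction l1 as [|a l1 IH]; simpl; [|rewrite lsum_app, lsum_map, IH]; reflexivity. Qed.

Lemma sum1_ext q f g : (forall x, f x = g x) -> sum1 q f = sum1 q g.
Proof. intros H. rewrite !sum1_lsum. apply lsum_ext. auto. Qed.

Lemma sum1_mul q1 q2 f g :
  Cmult (sum1 q1 f) (sum1 q2 g) = sum1 q1 (fun x => sum1 q2 (fun y => Cmult (f x) (g y))).
Proof. rewrite !sum1_lsum, lsum_mul. reflexivity. Qed.

Lemma mod_eq_of_divide_sub q x y : q <> 0 -> (q | x - y) -> x mod q = y mod q.
Proof. intros Hq [k Hk]. replace x with (y + k * q) by lia. apply Z_mod_plus_full. Qed.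

Lemma divide_sub_of_mod_eq q x y : q <> 0 -> x mod q = y mod q -> (q | x - y).
Proof.
  intros Hq E. exists (x / q - y / q).
  pose proof (Z.div_mod x q Hq). pose proof (Z.div_mod y q Hq). nia.
Qed.

Lemma residue_eq q a b : 1 <= a <= q -> 1 <= b <= q -> (q | a - b) -> a = b.
Proof. intros Ha Hb [k Hk]. assert (k = 0) by nia. subst. lia. Qed.

Definition periodic (q : Z) (F : Z -> C) : Prop := forall x y, (q | x - y) -> F x = F y.

(* Read through [h], the list [l] contains every residue class mod [q] exactly once. *)
Definition complete_residues {A} (q : Z) (h : A -> Z) (l : list A) : Prop :=
  NoDup l /\ length l = Z.to_nat q /\
  forall x y, In x l -> In y l -> (q | h x - h y) -> x = y.

Definition range0 (q : Z) : list Z := map Z.of_nat (seq 0 (Z.to_nat q)).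

Lemma lsum_complete_residues_range0 {A} q (h : A -> Z) l F :
  0 < q -> periodic q F -> complete_residues q h l ->
  lsum l (fun x => F (h x)) = lsum (range0 q) F.
Proof.
  intros Hq HF (Hnd & Hlen & Hinj).
  rewrite (lsum_ext l _ (fun x => F (h x mod q))).
  2:{ intros x _. apply HF. exists (h x / q). pose proof (Z.div_mod (h x) q ltac:(lia)). lia. }
  rewrite <- (lsum_map l (fun x => h x mod q) F). apply lsum_perm.
  set (res := map (fun x => h x mod q) l).
  assert (Hres : NoDup res).
  { apply NoDup_map_NoDup_ForallPairs; [|exact Hnd].
    intros x y Hx Hy E. apply Hinj; auto. apply divide_sub_of_mod_eq; lia. }
  assert (Hrange : NoDup (range0 q)).
  { apply FinFun.Injective_map_NoDup; [intros a b; lia | apply seq_NoDup]. }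
  assert (Hincl : incl res (range0 q)).
  { intros r Hr. apply in_map_iff in Hr as [x [<- _]].
    apply in_map_iff. exists (Z.to_nat (h x mod q)).
    pose proof (Z.mod_pos_bound (h x) q Hq). split; [lia|]. apply in_seq. lia. }
  apply NoDup_Permutation; auto. intros r; split; [apply Hincl|].
  apply (NoDup_length_incl Hres); auto.
  unfold res, range0. rewrite !length_map, length_seq. lia.
Qed.

Lemma NoDup_list_prod {A B} (l1 : list A) (l2 : list B) :
  NoDup l1 -> NoDup l2 -> NoDup (list_prod l1 l2).
Proof.
  intros H1 H2; induction H1 as [|a l1 Ha _ IH]; simpl; [constructor|].
  apply NoDup_app; auto.
  - apply FinFun.Injective_map_NoDup; [intros b b' E; congruence | exact H2].
  - intros [a' b] Hin Hin'. apply in_map_iff in Hin as [b' [E _]]. injection E as -> _.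
    apply in_prod_iff in Hin' as [Hin' _]. contradiction.
Qed.

Lemma complete_residues_seq q : complete_residues q Z.of_nat (seq 1 (Z.to_nat q)).
Proof.
  split; [apply seq_NoDup|]. split; [apply length_seq|].
  intros x y Hx Hy E. apply in_seq in Hx, Hy.
  apply (residue_eq q) in E; lia.
Qed.

Lemma complete_residues_scale {A} q c (h : A -> Z) l :
  Z.gcd q c = 1 -> complete_residues q h l -> complete_residues q (fun x => c * h x) l.
Proof.
  intros Hc (Hnd & Hlen & Hinj). split; [exact Hnd|]. split; [exact Hlen|].
  intros x y Hx Hy E. apply Hinj; auto. apply (Z.gauss _ c); auto.
  replace (c * (h x - h y)) with (c * h x - c * h y) by ring. exact E.
Qed.

Lemma complete_residues_crt {A B} q1 q2 (h1 : A -> Z) (h2 : B -> Z) l1 l2 :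
  0 <= q1 -> 0 <= q2 -> Z.gcd q1 q2 = 1 ->
  complete_residues q1 h1 l1 -> complete_residues q2 h2 l2 ->
  complete_residues (q1 * q2) (fun p => h1 (fst p) * q2 + h2 (snd p) * q1) (list_prod l1 l2).
Proof.
  intros H1 H2 Hg (Hnd1 & Hlen1 & Hinj1) (Hnd2 & Hlen2 & Hinj2).
  split; [now apply NoDup_list_prod|]. split.
  { rewrite length_prod, Hlen1, Hlen2, Z2Nat.inj_mul; auto. }
  intros [a b] [c d] Hab Hcd [k Hk]. simpl in Hk.
  apply in_prod_iff in Hab as [Ha Hb], Hcd as [Hc Hd].
  assert (E1 : (q1 | q2 * (h1 a - h1 c))) by (exists (k * q2 - (h2 b - h2 d)); lia).
  assert (E2 : (q2 | q1 * (h2 b - h2 d))) by (exists (k * q1 - (h1 a - h1 c)); lia).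
  apply Z.gauss in E1; [|exact Hg]. apply Z.gauss in E2; [|rewrite Z.gcd_comm; exact Hg].
  f_equal; auto.
Qed.

Lemma sum1_complete_residues {A} q (h : A -> Z) l F :
  0 < q -> periodic q F -> complete_residues q h l ->
  lsum l (fun x => F (h x)) = sum1 q F.
Proof.
  intros Hq HF Hl. rewrite sum1_lsum.
  rewrite (lsum_complete_residues_range0 q h l F), (lsum_complete_residues_range0 q Z.of_nat);
    auto using complete_residues_seq.
Qed.

Lemma sum1_scale q c F :
  0 < q -> periodic q F -> Z.gcd q c = 1 -> sum1 q (fun x => F (c * x)) = sum1 q F.
Proof.
  intros Hq HF Hc. rewrite sum1_lsum.
  apply (sum1_complete_residues q (fun k => c * Z.of_nat k)); auto.
  apply complete_residues_scale; auto using complete_residues_seq.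
Qed.

Lemma sum1_crt q1 q2 F :
  1 <= q1 -> 1 <= q2 -> Z.gcd q1 q2 = 1 -> periodic (q1 * q2) F ->
  sum1 q1 (fun x1 => sum1 q2 (fun x2 => F (x1 * q2 + x2 * q1))) = sum1 (q1 * q2) F.
Proof.
  intros H1 H2 Hg HF.
  rewrite sum1_lsum, (lsum_ext _ _ (fun x1 => lsum (seq 1 (Z.to_nat q2))
    (fun x2 => F (Z.of_nat x1 * q2 + Z.of_nat x2 * q1)))) by reflexivity.
  rewrite <- (lsum_list_prod _ _ (fun p => F (Z.of_nat (fst p) * q2 + Z.of_nat (snd p) * q1))).
  apply (sum1_complete_residues _ (fun p => Z.of_nat (fst p) * q2 + Z.of_nat (snd p) * q1));
    [lia | exact HF |].
  apply complete_residues_crt; auto using complete_residues_seq; lia.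
Qed.

Lemma e_add x y : e (x + y)%R = Cmult (e x) (e y).
Proof.
  unfold e, Cmult; simpl.
  replace (2 * PI * (x + y))%R with (2 * PI * x + 2 * PI * y)%R by ring.
  rewrite cos_plus, sin_plus. f_equal; ring.
Qed.

Lemma e_0 : e 0 = RtoC 1.
Proof. unfold e, RtoC. rewrite Rmult_0_r, cos_0, sin_0. reflexivity. Qed.

Lemma e_nat n : e (INR n) = RtoC 1.
Proof.
  induction n as [|n IH]; [apply e_0|].
  rewrite S_INR, e_add, IH. unfold e, RtoC, Cmult; simpl.
  rewrite Rmult_1_r, cos_2PI, sin_2PI. f_equal; ring.
Qed.

Lemma e_int k : e (IZR k) = RtoC 1.
Proof.
  destruct (Z_le_gt_dec 0 k) as [Hk|Hk].
  - rewrite <- (Z2Nat.id k Hk), <- INR_IZR_INZ. apply e_nat.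
  - replace (IZR k) with (- INR (Z.to_nat (- k)))%R
      by (rewrite INR_IZR_INZ, <- opp_IZR; f_equal; lia).
    set (r := INR (Z.to_nat (- k))).
    transitivity (Cmult (e (- r)) (e r)); [unfold r; rewrite e_nat; ring|].
    rewrite <- e_add, Rplus_opp_l. apply e_0.
Qed.

Lemma e_frac_periodic q z z' : q <> 0 -> (q | z - z') -> e (IZR z / IZR q) = e (IZR z' / IZR q).
Proof.
  intros Hq [k Hk]. replace z with (z' + k * q) by lia.
  replace (IZR (z' + k * q) / IZR q)%R with (IZR z' / IZR q + IZR k)%R
    by (rewrite plus_IZR, mult_IZR; field; apply not_0_IZR; exact Hq).
  rewrite e_add, e_int. ring.
Qed.

Lemma e_frac_mul q1 q2 z1 z2 : q1 <> 0 -> q2 <> 0 ->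
  Cmult (e (IZR z1 / IZR q1)) (e (IZR z2 / IZR q2)) = e (IZR (z1 * q2 + z2 * q1) / IZR (q1 * q2)).
Proof.
  intros H1 H2. rewrite <- e_add. f_equal.
  rewrite plus_IZR, !mult_IZR. field. split; apply not_0_IZR; assumption.
Qed.

Lemma S_periodic q n : q <> 0 -> periodic q (fun a => S q a n).
Proof.
  intros Hq a a' [k Hk]. apply sum1_ext. intros x. apply e_frac_periodic; auto.
  exists (k * x ^ 2). replace a with (a' + k * q) by lia. ring.
Qed.

Lemma S_mul q1 q2 a n : 1 <= q1 -> 1 <= q2 -> Z.gcd q1 q2 = 1 ->
  S (q1 * q2) a n = Cmult (S q1 (a * q2) n) (S q2 (a * q1) n).
Proof.
  intros H1 H2 Hg. unfold S at 1.
  rewrite <- sum1_crt; auto.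
  2:{ intros x y [k Hk]. apply e_frac_periodic; [lia|].
      exists (k * (a * (x + y) + n)). replace x with (y + k * (q1 * q2)) by lia. ring. }
  unfold S. rewrite sum1_mul. apply sum1_ext; intros x1. apply sum1_ext; intros x2.
  rewrite e_frac_mul by lia. apply e_frac_periodic; [lia|].
  exists (2 * a * x1 * x2). ring.
Qed.

Lemma find_ext {A} (f g : A -> bool) l : (forall x, f x = g x) -> find f l = find g l.
Proof. intros H; induction l as [|x l IH]; simpl; [|rewrite H, IH]; reflexivity. Qed.

Lemma invmod_periodic q a a' : q <> 0 -> (q | a - a') -> invmod a q = invmod a' q.
Proof.
  intros Hq Ha. unfold invmod.
  rewrite (find_ext _ (fun b => (a' * b) mod q =? 1 mod q)); [reflexivity|].
  intros b. rewrite (mod_eq_of_divide_sub q (a * b) (a' * b)); auto.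
  replace (a * b - a' * b) with ((a - a') * b) by ring. apply Z.divide_mul_l, Ha.
Qed.

Lemma invmod_spec a q : 1 <= q -> Z.gcd a q = 1 -> (q | a * invmod a q - 1).
Proof.
  intros Hq Hg. unfold invmod.
  destruct (find _ _) as [b|] eqn:Ef.
  - apply find_some in Ef as [_ Hb]. apply Z.eqb_eq in Hb. apply divide_sub_of_mod_eq; lia.
  - (* a Bezout coefficient of [a], shifted into [1..q], would have been found *)
    exfalso. destruct (Z.gcd_bezout _ _ _ Hg) as [s [t Hst]].
    pose proof (Z.div_mod (s - 1) q ltac:(lia)).
    pose proof (Z.mod_pos_bound (s - 1) q ltac:(lia)).
    set (b := (s - 1) mod q + 1) in *.
    assert (Hb : In b (map Z.of_nat (seq 1 (Z.to_nat q)))).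
    { apply in_map_iff. exists (Z.to_nat b). split; [lia|]. apply in_seq. lia. }
    apply (find_none _ _ Ef b), Z.eqb_neq in Hb. apply Hb, mod_eq_of_divide_sub; [lia|].
    exists (- t - a * ((s - 1) / q)). nia.
Qed.

Lemma inverse_mod_unique q b x y : (q | b * x - 1) -> (q | b * y - 1) -> (q | x - y).
Proof.
  intros Hx Hy. replace (x - y) with (y * (b * x - 1) - x * (b * y - 1)) by ring.
  apply Z.divide_sub_r; apply Z.divide_mul_r; assumption.
Qed.

Lemma gcd_periodic q a a' : q <> 0 -> (q | a - a') -> Z.gcd a q = Z.gcd a' q.
Proof.
  intros Hq Ha. rewrite <- (Z.gcd_mod_l a), <- (Z.gcd_mod_l a').
  rewrite (mod_eq_of_divide_sub q a a'); auto.
Qed.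

Lemma coprime_mul_iff q1 q2 a : Z.gcd q1 q2 = 1 ->
  Z.gcd a (q1 * q2) = 1 <-> Z.gcd (a * q2) q1 = 1 /\ Z.gcd (a * q1) q2 = 1.
Proof.
  rewrite !Zgcd_1_rel_prime. intros Hq. split.
  - intros Ha. apply rel_prime_sym in Ha.
    split; apply rel_prime_sym, rel_prime_mult; auto using rel_prime_sym.
    + apply (rel_prime_div _ _ _ Ha). apply Z.divide_factor_l.
    + apply (rel_prime_div _ _ _ Ha). apply Z.divide_factor_r.
  - intros [H1 H2]. apply rel_prime_mult.
    + apply (rel_prime_div _ _ _ H1), Z.divide_factor_l.
    + apply (rel_prime_div _ _ _ H2), Z.divide_factor_l.
Qed.

Lemma invmod_crt q1 q2 a u v : 1 <= q1 -> 1 <= q2 -> Z.gcd q1 q2 = 1 ->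
  u * q2 + v * q1 = 1 -> Z.gcd a (q1 * q2) = 1 ->
  (q1 | invmod (a * q2) q1 - invmod a (q1 * q2) * u).
Proof.
  intros H1 H2 Hg Huv Ha. set (ia := invmod a (q1 * q2)).
  assert (Hia : (q1 | a * ia - 1)).
  { apply (Z.divide_trans _ (q1 * q2)); [apply Z.divide_factor_l | apply invmod_spec; lia]. }
  apply (inverse_mod_unique q1 (a * q2)).
  - apply invmod_spec; [lia|]. apply (coprime_mul_iff q1 q2); auto.
  - replace (a * q2 * (ia * u) - 1) with ((a * ia - 1) * (u * q2) - v * q1) by lia.
    apply Z.divide_sub_r; [apply Z.divide_mul_l, Hia | apply Z.divide_factor_r].
Qed.

Lemma e_invmod_mul q1 q2 a k :
  1 <= q1 -> 1 <= q2 -> Z.gcd q1 q2 = 1 -> Z.gcd a (q1 * q2) = 1 ->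
  e (IZR (invmod a (q1 * q2) * k) / IZR (q1 * q2)) =
  Cmult (e (IZR (invmod (a * q2) q1 * k) / IZR q1))
        (e (IZR (invmod (a * q1) q2 * k) / IZR q2)).
Proof.
  intros H1 H2 Hg Ha. set (ia := invmod a (q1 * q2)).
  destruct (Z.gcd_bezout q2 q1 1) as [u [v Huv]]; [rewrite Z.gcd_comm; exact Hg|].
  assert (Hi1 := invmod_crt q1 q2 a u v H1 H2 Hg Huv Ha).
  assert (Hi2 := invmod_crt q2 q1 a v u H2 H1 ltac:(rewrite Z.gcd_comm; exact Hg) ltac:(lia)
                   ltac:(rewrite Z.mul_comm; exact Ha)).
  rewrite (Z.mul_comm q2 q1) in Hi2. fold ia in Hi2.
  rewrite (e_frac_periodic q1 _ (ia * u * k)), (e_frac_periodic q2 _ (ia * v * k)), e_frac_mul;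
    try lia.
  - f_equal. f_equal. f_equal.
    transitivity (ia * k * (u * q2 + v * q1)); [rewrite Huv|]; ring.
  - rewrite <- Z.mul_sub_distr_r. apply Z.divide_mul_l, Hi2.
  - rewrite <- Z.mul_sub_distr_r. apply Z.divide_mul_l, Hi1.
Qed.

Section TwistedSum.

Variables n1 n2 n3 m : Z.

Definition T_term (q a : Z) : C :=
  if Z.gcd a q =? 1 then
    Cmult (Cmult (Cmult (S q a n1) (S q a n2)) (S q a n3)) (e (IZR (invmod a q * m) / IZR q))
  else RtoC 0.

Lemma T_sum1 q : T q n1 n2 n3 m = sum1 q (T_term q).
Proof. reflexivity. Qed.

Lemma T_term_periodic q : q <> 0 -> periodic q (T_term q).
Proof.
  intros Hq a a' Ha. unfold T_term.
  rewrite (gcd_periodic q a a'), (invmod_periodic q a a'), !(S_periodic q _ Hq a a'); auto.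
Qed.

Lemma T_term_mul q1 q2 a : 1 <= q1 -> 1 <= q2 -> Z.gcd q1 q2 = 1 ->
  T_term (q1 * q2) a = Cmult (T_term q1 (a * q2)) (T_term q2 (a * q1)).
Proof.
  intros H1 H2 Hg. unfold T_term.
  assert (Hcop : (Z.gcd a (q1 * q2) =? 1) =
                 ((Z.gcd (a * q2) q1 =? 1) && (Z.gcd (a * q1) q2 =? 1))%bool).
  { apply Bool.eq_iff_eq_true. rewrite Bool.andb_true_iff, !Z.eqb_eq. apply coprime_mul_iff, Hg. }
  rewrite Hcop.
  destruct (Z.gcd (a * q2) q1 =? 1) eqn:G1, (Z.gcd (a * q1) q2 =? 1) eqn:G2; simpl; try ring.
  assert (Ha : Z.gcd a (q1 * q2) = 1) by (apply Z.eqb_eq; exact Hcop).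
  rewrite !(S_mul q1 q2), (e_invmod_mul q1 q2) by assumption. ring.
Qed.

End TwistedSum.

Theorem lemma3p5 (q1 q2 : Z) (hq1 : (1 <= q1)%Z) (hq2 : (1 <= q2)%Z)
  (hcop : Z.gcd q1 q2 = 1%Z) (n1 n2 n3 m : Z) :
  T (q1 * q2) n1 n2 n3 m = Cmult (T q1 n1 n2 n3 m) (T q2 n1 n2 n3 m).
Proof.
  rewrite !T_sum1.
  rewrite <- sum1_crt by (auto; apply T_term_periodic; lia).
  rewrite (sum1_ext q1 _ (fun a1 => sum1 q2 (fun a2 =>
     Cmult (T_term n1 n2 n3 m q1 (q2 * q2 * a1)) (T_term n1 n2 n3 m q2 (q1 * q1 * a2))))).
  2:{ intros a1. apply sum1_ext. intros a2. rewrite T_term_mul by assumption.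
      f_equal; apply T_term_periodic; try lia; [exists (a2 * q2) | exists (a1 * q1)]; ring. }
  assert (Hsq1 : Z.gcd q1 (q2 * q2) = 1)
    by now apply Zgcd_1_rel_prime, rel_prime_mult; apply Zgcd_1_rel_prime.
  assert (Hsq2 : Z.gcd q2 (q1 * q1) = 1)
    by now apply Zgcd_1_rel_prime, rel_prime_mult; apply Zgcd_1_rel_prime; rewrite Z.gcd_comm.
  rewrite <- (sum1_scale q1 (q2 * q2) (T_term n1 n2 n3 m q1)),
          <- (sum1_scale q2 (q1 * q1) (T_term n1 n2 n3 m q2)), sum1_mul;
    auto using T_term_periodic with zarith.
Qed.
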